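(* Let $r_{\min}>0$ and let $P=(P_x,P_y,P_\theta)$ with $(P_x,P_y)\in\mathbb{R}^2$ and $P_\theta\in[0,2\pi)$ be a start configuration. Let $\mathcal{G}_\infty=\{(x,y)\in\mathbb{R}^2 : y=\mathcal{G}_y\}$ be a horizontal line with $\mathcal{G}_y>P_y$. Define $$m=\begin{cases}+1, & P_\theta\in[0,\tfrac{\pi}{2}]\cup[\tfrac{3\pi}{2},2\pi),\\ -1, & \text{otherwise},\end{cases}\qquad n=\begin{cases}0, & P_\theta\in[0,\tfrac{\pi}{2}],\\ \pi, & P_\theta\in(\tfrac{\pi}{2},\tfrac{3\pi}{2}],\\ 2\pi, & P_\theta\in(\tfrac{3\pi}{2},2\pi),\end{cases}$$ and $o_y=P_y+m\,r_{\min}\cos(P_\theta)$ (this is the $y$-coordinate of the center $o$ of the circle of radius $r_{\min}$ through $(P_x,P_y)$, tangent to the heading $P_\theta$, on which the vehicle rotates its heading toward $\pi/2$ by the shorter rotation). Consider all feasible paths (in the sense of the unicycle model below) starting at configuration $P$ and ending at any point of $\mathcal{G}_\infty$, with arbitrary final heading. Then a shortest such path exists and it is a Dubins path of the following form: 1. If $o_y\le \mathcal{G}_y$, it consists of a circular arc of radius $r_{\min}$ (turning the heading toward $\pi/2$ by the shorter rotation) followed by a straight segment, and the straight segment meets $\mathcal{G}_\infty$ at a right angle (i.e. has heading $\pi/2$). 2. If $o_y>\mathcal{G}_y$, it consists of a single circular arc of radius $r_{\min}$. Moreover, the length $h(P)$ of this shortest path is $$h(P)=\begin{cases} h_1(P)=r_{\min}\min\!\left(\left|P_\theta-\tfrac{\pi}{2}\right|,\left|P_\theta-\tfrac{5\pi}{2}\right|\right)+\mathcal{G}_y-o_y,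 & \text{if } o_y\le \mathcal{G}_y,\\[4pt] h_2(P)=r_{\min}\left|P_\theta-m\arccos\!\left(\dfrac{o_y-\mathcal{G}_y}{r_{\min}}\right)-n\right|, & \text{if } o_y>\mathcal{G}_y.\end{cases}$$
   Context: Vehicle model (forward-moving unicycle / Dubins car): a path is a curve $s\mapsto (x(s),y(s),\theta(s))$ parameterized by arc length $s\in[0,s_f]$ satisfying $\dot x(s)=\cos\theta(s)$, $\dot y(s)=\sin\theta(s)$, $\dot\theta(s)=\kappa(s)$ with $|\kappa(s)|\le \kappa_{\max}$, where derivatives are with respect to arc length and $r_{\min}=\kappa_{\max}^{-1}$ is the minimum turning radius. Such a path is called feasible; its length is $s_f$. Headings are angles in $[0,2\pi)$ measured from the positive $x$-axis. A Dubins path is a path composed of circular arcs of radius $r_{\min}$ (''C'') and straight line segments (''S''). In the application, $\mathcal{G}_\infty$ is the line containing a goal segment located ahead of the vehicle (hence $\mathcal{G}_y>P_y$), and $h(P)$ is used as an admissible heuristic for A* search. *)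

From Stdlib Require Import Reals Lra.
From Coquelicot Require Import Coquelicot.
Open Scope R_scope.

(* A candidate path s |-> (x s, y s, th s) on [0, sf], parameterized by arc length. *)
Record path := mkPath { sf : R; px : R -> R; py : R -> R; pth : R -> R }.

(* Feasibility for the forward unicycle with kmax = 1/rmin:
   x' = cos th, y' = sin th on [0,sf], and th' = kappa with |kappa| <= kmax,
   which we express as: th is (1/rmin)-Lipschitz on [0,sf]. *)
Definition feasible (rmin : R) (p : path) : Prop :=
  0 <= sf p /\
  (forall s, 0 <= s <= sf p -> is_derive (px p) s (cos (pth p s))) /\
  (forall s, 0 <= s <= sf p -> is_derive (py p) s (sin (pth p s))) /\
  (forall s1 s2, 0 <= s1 <= sf p -> 0 <= s2 <= sf p ->
     Rabs (pth p s1 - pth p s2) <= Rabs (s1 - s2) / rmin).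

Definition feasible_to_line (rmin Px Py Pth Gy : R) (p : path) : Prop :=
  feasible rmin p /\
  px p 0 = Px /\ py p 0 = Py /\ pth p 0 = Pth /\
  py p (sf p) = Gy.

Definition m_of (Pth : R) : R :=
  if Rle_dec Pth (PI/2) then 1 else if Rle_dec (3*PI/2) Pth then 1 else -1.

Definition n_of (Pth : R) : R :=
  if Rle_dec Pth (PI/2) then 0 else if Rle_dec Pth (3*PI/2) then PI else 2*PI.

Definition oy_of (rmin Py Pth : R) : R := Py + m_of Pth * rmin * cos Pth.

Definition h1 (rmin Py Pth Gy : R) : R :=
  rmin * Rmin (Rabs (Pth - PI/2)) (Rabs (Pth - 5*PI/2)) + Gy - oy_of rmin Py Pth.

Definition h2 (rmin Py Pth Gy : R) : R :=
  rmin * Rabs (Pth - m_of Pth * acos ((oy_of rmin Py Pth - Gy) / rmin) - n_of Pth).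

Definition arc_on (rmin sigma : R) (p : path) (a b : R) : Prop :=
  forall s, a <= s <= b -> pth p s = pth p a + sigma * (s - a) / rmin.

Definition form_arc_straight (rmin Pth : R) (p : path) : Prop :=
  exists s1, 0 <= s1 <= sf p /\
    arc_on rmin (m_of Pth) p 0 s1 /\
    (forall s, s1 <= s <= sf p -> pth p s = pth p s1) /\
    (exists k : Z, pth p s1 = PI/2 + 2 * IZR k * PI).

Definition form_single_arc (rmin : R) (p : path) : Prop :=
  exists sigma, (sigma = 1 \/ sigma = -1) /\ arc_on rmin sigma p 0 (sf p).

(* Write the start heading as Pth = T - m*A, where T is a vertical heading
   (pi/2 modulo 2*pi), m = +1/-1 is the direction of the shorter rotation
   towards T and A in [0, pi] is the angle still to be turned.  The candidate
   path turns at full curvature in direction m until it points up and then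
   goes straight up; along it the remaining angle is turn(s) = max(A - s/r, 0),
   so its vertical speed is cos(turn s).  A heading that is (1/r)-Lipschitz
   and starts at Pth is still at least turn(s) away from vertical at arc
   length s, so ANY feasible path climbs at speed at most cos(turn s).  By a
   derivative comparison no feasible path reaches the line before the
   candidate does, which gives optimality; the candidate meets the line
   either on its straight part (o_y <= G_y) or already during the turn
   (o_y > G_y), and its length is h1 resp. h2. *)

From Stdlib Require Import Reals Lra.
From Coquelicot Require Import Coquelicot.
Open Scope R_scope.

Lemma derivable_pt_lim_glue (g1 g2 d1 d2 : R -> R) (x0 : R) :
  (forall s, derivable_pt_lim g1 s (d1 s)) ->
  (forall s, derivable_pt_lim g2 s (d2 s)) ->
  g1 x0 = g2 x0 -> d1 x0 = d2 x0 ->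
  forall s, derivable_pt_lim (fun t => if Rle_dec t x0 then g1 t else g2 t) s
              (if Rle_dec s x0 then d1 s else d2 s).
Proof.
  intros H1 H2 Hg Hd s eps Heps.
  destruct (H1 s eps Heps) as [d1' Hd1]; destruct (H2 s eps Heps) as [d2' Hd2].
  set (dist := if Req_dec_T s x0 then Rmin d1' d2' else Rabs (s - x0)).
  assert (Hdist : 0 < dist).
  { unfold dist; destruct Req_dec_T.
    - apply Rmin_glb_lt; apply cond_pos.
    - apply Rabs_pos_lt; lra. }
  assert (Hpos : 0 < Rmin (Rmin d1' d2') dist).
  { repeat apply Rmin_glb_lt; try apply cond_pos; lra. }
  exists (mkposreal _ Hpos); intros h Hh Hsmall; simpl in Hsmall.
  assert (Hh1 : Rabs h < d1') by
    (eapply Rlt_le_trans; [exact Hsmall|]; eapply Rle_trans; apply Rmin_l).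
  assert (Hh2 : Rabs h < d2') by
    (eapply Rlt_le_trans; [exact Hsmall|];
     eapply Rle_trans; [apply Rmin_l|apply Rmin_r]).
  assert (Hh3 : Rabs h < dist) by (eapply Rlt_le_trans; [exact Hsmall|apply Rmin_r]).
  pose proof (Rle_abs h); pose proof (Rle_abs (- h)); rewrite Rabs_Ropp in *.
  destruct (Req_dec_T s x0) as [<-|Hne].
  - destruct (Rle_dec s s); [|lra].
    destruct (Rle_dec (s + h) s); [now apply Hd1|].
    rewrite Hg, Hd; now apply Hd2.
  - unfold dist in Hh3; destruct (Req_dec_T s x0); [contradiction|].
    destruct (Rcase_abs (s - x0)) as [Hneg|Hnn];
      [rewrite (Rabs_left _ Hneg) in Hh3 | rewrite (Rabs_right _ Hnn) in Hh3];
      destruct (Rle_dec s x0); destruct (Rle_dec (s + h) x0);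
      try lra; first [now apply Hd1 | now apply Hd2].
Qed.

Lemma increment_comparison (f g f' g' : R -> R) (a b : R) : a < b ->
  (forall s, a <= s <= b -> derivable_pt_lim f s (f' s)) ->
  (forall s, a <= s <= b -> derivable_pt_lim g s (g' s)) ->
  (forall s, a < s < b -> f' s <= g' s) ->
  f b - f a <= g b - g a.
Proof.
  intros Hab Hf Hg Hle.
  destruct (MVT_cor2 (fun s => g s - f s) (fun s => g' s - f' s) a b Hab)
    as [c [Hc Hcab]].
  { intros c Hc; apply derivable_pt_lim_minus; auto. }
  assert (f' c <= g' c) by (apply Hle; lra).
  assert (0 <= (g' c - f' c) * (b - a)) by (apply Rmult_le_pos; lra).
  lra.
Qed.

Lemma cos_le_of_far (c w : R) : 0 <= c <= PI -> c <= w <= 2*PI - c -> cos w <= cos c.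
Proof.
  intros Hc Hw; destruct (Rle_dec w PI).
  - destruct (Req_dec c w) as [->|]; [lra|].
    left; apply cos_decreasing_1; lra.
  - replace (cos w) with (cos (2*PI - w)) by (rewrite cos_minus, cos_2PI, sin_2PI; ring).
    destruct (Req_dec c (2*PI - w)) as [<-|]; [lra|].
    left; apply cos_decreasing_1; lra.
Qed.

Definition vertical (k : nat) : R := PI/2 + 2 * INR k * PI.

Lemma vertical_rotated (k : nat) (m u : R) : m = 1 \/ m = -1 ->
  cos (vertical k - m*u) = m * sin u /\ sin (vertical k - m*u) = cos u.
Proof.
  intro Hm; unfold vertical; rewrite cos_minus, sin_minus, sin_period, cos_period,
    sin_PI2, cos_PI2.
  destruct Hm as [-> | ->]; rewrite ?Rmult_1_l;
    [|replace (-1*u) with (-u) by ring; rewrite sin_neg, cos_neg]; split; ring.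
Qed.

Lemma asin_below (k A : R) : 0 <= A <= PI -> 0 < k < sin A ->
  0 < asin k < A /\ sin (asin k) = k /\ forall v, asin k < v <= A -> k < sin v.
Proof.
  intros HA Hk.
  assert (Hk1 : -1 < k < 1) by (pose proof (SIN_bound A); lra).
  destruct (asin_bound_lt k Hk1) as [Hb1 Hb2].
  assert (Hs : sin (asin k) = k) by (apply sin_asin; lra).
  assert (Habove : forall v, asin k < v <= A -> v <= PI/2 -> k < sin v).
  { intros v Hv Hv2; rewrite <- Hs at 1; apply sin_increasing_1; lra. }
  assert (Hpos : 0 < asin k).
  { destruct (Rle_dec (asin k) 0) as [Hle|]; [|lra].
    assert (sin (asin k) <= sin 0) by (apply sin_incr_1; lra).
    rewrite sin_0 in *; lra. }
  assert (HltA : asin k < A).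
  { destruct (Rle_dec A (asin k)) as [Hle|]; [|lra].
    assert (sin A <= sin (asin k)) by (apply sin_incr_1; lra); lra. }
  repeat split; try lra.
  intros v Hv; destruct (Rle_dec v (PI/2)); [now apply Habove|].
  destruct (Req_dec v A) as [->|]; [lra|].
  assert (sin A < sin v) by (apply sin_decreasing_1; lra); lra.
Qed.

Section Manoeuvre.

(* Turning radius r and angle A still to be turned before pointing upwards. *)
Variables r A : R.
Hypothesis Hr : 0 < r.
Hypothesis HA : 0 <= A <= PI.

Definition turn (s : R) : R := Rmax (A - s/r) 0.

Lemma turn_arc (s : R) : s <= r*A -> turn s = A - s/r.
Proof.
  intro Hs; unfold turn; apply Rmax_left.
  assert (s / r <= A) by (apply Rle_div_l; lra); lra.
Qed.

Lemma turn_straight (s : R) : r*A <= s -> turn s = 0.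
Proof.
  intro Hs; unfold turn; apply Rmax_right.
  assert (A <= s / r) by (apply Rle_div_r; lra); lra.
Qed.

Lemma turn_0 : turn 0 = A.
Proof.
  rewrite turn_arc by nra; unfold Rdiv; rewrite Rmult_0_l; ring.
Qed.

Lemma turn_lipschitz (s1 s2 : R) : Rabs (turn s1 - turn s2) <= Rabs (s1 - s2) / r.
Proof.
  replace (Rabs (s1 - s2) / r) with (Rabs (s1/r - s2/r)).
  2:{ replace (s1/r - s2/r) with ((s1 - s2) / r) by (field; lra).
      unfold Rdiv; rewrite Rabs_mult, (Rabs_right (/ r)); [reflexivity|].
      left; apply Rinv_0_lt_compat; lra. }
  unfold turn, Rmax; do 2 destruct Rle_dec; unfold Rabs; repeat destruct Rcase_abs; lra.
Qed.

(* Horizontal drift (up to the sign of rotation) and climb of the candidate. *)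
Definition drift (s : R) : R :=
  if Rle_dec s (r*A) then r * (cos (A - s/r) - cos A) else r * (1 - cos A).

Definition climb (s : R) : R :=
  if Rle_dec s (r*A) then r * (sin A - sin (A - s/r)) else r * sin A + (s - r*A).

Lemma drift_0 : drift 0 = 0.
Proof.
  unfold drift; destruct Rle_dec; [|nra].
  unfold Rdiv; rewrite Rmult_0_l, Rminus_0_r; ring.
Qed.

Lemma climb_0 : climb 0 = 0.
Proof.
  unfold climb; destruct Rle_dec; [|nra].
  unfold Rdiv; rewrite Rmult_0_l, Rminus_0_r; ring.
Qed.

Lemma A_minus_rA : A - r*A/r = 0.
Proof. field; lra. Qed.

Lemma climb_straight (s : R) : r*A <= s -> climb s = r * sin A + (s - r*A).
Proof.
  intro Hs; unfold climb; destruct Rle_dec; [|reflexivity].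
  replace s with (r*A) by lra; rewrite A_minus_rA, sin_0; ring.
Qed.

Lemma drift_deriv (s : R) : derivable_pt_lim drift s (sin (turn s)).
Proof.
  replace (sin (turn s)) with (if Rle_dec s (r*A) then sin (A - s/r) else 0).
  2:{ destruct Rle_dec; [rewrite turn_arc | rewrite turn_straight, sin_0]; lra. }
  apply (derivable_pt_lim_glue (fun t => r * (cos (A - t/r) - cos A))
    (fun _ => r * (1 - cos A)) (fun t => sin (A - t/r)) (fun _ => 0)).
  - intro t; apply is_derive_Reals; auto_derive; auto.
    replace (A + - (t * / r)) with (A - t/r) by (unfold Rdiv; ring); field; lra.
  - intro t; apply is_derive_Reals; auto_derive; auto; ring.
  - rewrite A_minus_rA, cos_0; ring.
  - now rewrite A_minus_rA, sin_0.
Qed.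

Lemma climb_deriv (s : R) : derivable_pt_lim climb s (cos (turn s)).
Proof.
  replace (cos (turn s)) with (if Rle_dec s (r*A) then cos (A - s/r) else 1).
  2:{ destruct Rle_dec; [rewrite turn_arc | rewrite turn_straight, cos_0]; lra. }
  apply (derivable_pt_lim_glue (fun t => r * (sin A - sin (A - t/r)))
    (fun t => r * sin A + (t - r*A)) (fun t => cos (A - t/r)) (fun _ => 1)).
  - intro t; apply is_derive_Reals; auto_derive; auto.
    replace (A + - (t * / r)) with (A - t/r) by (unfold Rdiv; ring); field; lra.
  - intro t; apply is_derive_Reals; auto_derive; auto; ring.
  - rewrite A_minus_rA, sin_0; ring.
  - now rewrite A_minus_rA, cos_0.
Qed.

(* Key bound: an angle w that is at most s/r away from m*A has cosine at most
   cos (turn s); a feasible heading cannot become vertical faster. *)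
Lemma cos_le_turn (m w s : R) : m = 1 \/ m = -1 -> 0 <= s ->
  Rabs (w - m*A) <= s/r -> cos w <= cos (turn s).
Proof.
  intros Hm Hs Hw; destruct (Rle_dec (r*A) s).
  { rewrite turn_straight, cos_0 by lra; apply COS_bound. }
  rewrite turn_arc by lra.
  assert (s / r <= A) by (apply Rle_div_l; lra).
  assert (0 <= s / r) by (apply Rdiv_le_0_compat; lra).
  apply Rabs_le_between in Hw.
  destruct Hm as [-> | ->]; [|rewrite <- cos_neg]; apply cos_le_of_far; lra.
Qed.

(* Arc length at which the candidate has climbed the height D. *)
Definition stop_length (D : R) : R :=
  if Rle_dec (r * sin A) D then r*A + D - r * sin A
  else r * (A - asin ((r * sin A - D) / r)).

Lemma stop_length_straight (D : R) : 0 < D -> r * sin A <= D ->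
  stop_length D = r*A + D - r * sin A /\ climb (stop_length D) = D /\
  forall L, 0 <= L < stop_length D -> climb L < D.
Proof.
  intros HD Hreach; unfold stop_length; destruct Rle_dec; [|lra].
  split; [reflexivity|]; split; [rewrite climb_straight; lra|].
  intros L HL; destruct (Rle_dec (r*A) L); [rewrite climb_straight; lra|].
  destruct (Req_dec L 0) as [->|]; [rewrite climb_0; lra|].
  unfold climb; destruct Rle_dec; [|lra].
  assert (L / r < A) by (apply Rlt_div_l; lra).
  assert (0 < L / r) by (apply Rdiv_lt_0_compat; lra).
  assert (0 < sin (A - L/r)) by (apply sin_gt_0; lra).
  nra.
Qed.

Lemma stop_length_arc (D : R) : 0 < D -> D < r * sin A ->
  stop_length D = r * (A - asin ((r * sin A - D) / r)) /\
  stop_length D <= r*A /\ climb (stop_length D) = D /\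
  forall L, 0 <= L < stop_length D -> climb L < D.
Proof.
  intros HD Hreach; unfold stop_length; destruct Rle_dec; [lra|].
  set (k := (r * sin A - D) / r).
  assert (Hk : r * k = r * sin A - D) by (unfold k; field; lra).
  assert (0 < k < sin A) by (split; nra).
  destruct (asin_below k A HA ltac:(lra)) as [Hb [Hsb Habove]].
  split; [reflexivity|]; split; [nra|]; split.
  - unfold climb; destruct Rle_dec; [|nra].
    replace (A - r * (A - asin k) / r) with (asin k) by (field; lra).
    rewrite Hsb; lra.
  - intros L HL; unfold climb; destruct Rle_dec; [|nra].
    assert (L / r < A - asin k) by (apply Rlt_div_l; lra).
    assert (0 <= L / r) by (apply Rdiv_le_0_compat; lra).
    assert (k < sin (A - L/r)) by (apply Habove; lra).
    nra.
Qed.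

Lemma stop_length_spec (D : R) : 0 < D ->
  0 <= stop_length D /\ climb (stop_length D) = D /\
  forall L, 0 <= L < stop_length D -> climb L < D.
Proof.
  intro HD; destruct (Rle_dec (r * sin A) D).
  - destruct (stop_length_straight D) as (-> & ? & ?); auto.
    repeat split; auto; pose proof (SIN_bound A); nra.
  - destruct (stop_length_arc D) as (-> & ? & ? & ?); try lra.
    repeat split; auto.
    destruct (asin_below ((r * sin A - D) / r) A HA) as [[? ?] _]; [|nra].
    split; [apply Rdiv_lt_0_compat|apply Rlt_div_l]; lra.
Qed.

End Manoeuvre.

Section Candidate.

Variables r A m Px Py Gy : R.
Variable k : nat.
Hypothesis Hr : 0 < r.
Hypothesis HA : 0 <= A <= PI.
Hypothesis Hm : m = 1 \/ m = -1.
Hypothesis HG : Py < Gy.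

Definition candidate : path :=
  mkPath (stop_length r A (Gy - Py)) (fun s => Px + m * drift r A s)
    (fun s => Py + climb r A s) (fun s => vertical k - m * turn r A s).

Lemma candidate_feasible :
  feasible_to_line r Px Py (vertical k - m*A) Gy candidate.
Proof.
  destruct (stop_length_spec r A Hr HA (Gy - Py)) as (Hpos & Hend & _); [lra|].
  unfold feasible_to_line, feasible; simpl.
  refine (conj (conj Hpos (conj _ (conj _ _))) (conj _ (conj _ (conj _ _)))).
  - intros s _; apply is_derive_Reals; rewrite (proj1 (vertical_rotated k m _ Hm)).
    replace (m * sin (turn r A s)) with (0 + m * sin (turn r A s)) by ring.
    apply (derivable_pt_lim_plus (fun _ => Px) (fun t => m * drift r A t));
      [apply derivable_pt_lim_const|].
    apply (derivable_pt_lim_scal (drift r A)), drift_deriv; auto.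
  - intros s _; apply is_derive_Reals; rewrite (proj2 (vertical_rotated k m _ Hm)).
    replace (cos (turn r A s)) with (0 + cos (turn r A s)) by ring.
    apply (derivable_pt_lim_plus (fun _ => Py) (climb r A));
      [apply derivable_pt_lim_const|].
    apply climb_deriv; auto.
  - intros s1 s2 _ _.
    replace (vertical k - m * turn r A s1 - (vertical k - m * turn r A s2))
      with (- m * (turn r A s1 - turn r A s2)) by ring.
    rewrite Rabs_mult.
    replace (Rabs (- m)) with 1 by
      (destruct Hm as [-> | ->]; rewrite ?Rabs_Ropp, ?Rabs_R1, ?Rabs_m1; lra).
    rewrite Rmult_1_l; apply turn_lipschitz; auto.
  - rewrite drift_0 by auto; ring.
  - rewrite climb_0 by auto; ring.
  - rewrite turn_0 by auto; reflexivity.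
  - lra.
Qed.

Lemma heading_climb_bound (psi s : R) : 0 <= s ->
  Rabs (vertical k - m*A - psi) <= s / r -> sin psi <= cos (turn r A s).
Proof.
  intros Hs Hpsi.
  replace psi with (vertical k - 1 * (vertical k - psi)) by ring.
  rewrite (proj2 (vertical_rotated k 1 _ (or_introl eq_refl))).
  apply (cos_le_turn r A Hr HA m); auto.
  replace (vertical k - psi - m*A) with (vertical k - m*A - psi) by ring; exact Hpsi.
Qed.

Lemma candidate_optimal (q : path) :
  feasible_to_line r Px Py (vertical k - m*A) Gy q -> sf candidate <= sf q.
Proof.
  intros [[Hsf [_ [Hdy Hlip]]] [_ [Hy0 [Hth0 Hy1]]]]; simpl.
  destruct (stop_length_spec r A Hr HA (Gy - Py)) as (_ & _ & Hbelow); [lra|].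
  destruct (Rle_dec (stop_length r A (Gy - Py)) (sf q)) as [|Hshort]; [assumption|].
  exfalso.
  destruct Hsf as [Hsf|Hsf]; [|rewrite <- Hsf, Hy0 in Hy1; lra].
  assert (Hclimb : py q (sf q) - py q 0 <= climb r A (sf q) - climb r A 0).
  { apply (increment_comparison _ _ (fun s => sin (pth q s)) (fun s => cos (turn r A s))); auto.
    - intros s Hs; apply is_derive_Reals, Hdy; lra.
    - intros s _; apply climb_deriv; auto.
    - intros s Hs; apply heading_climb_bound; [lra|].
      rewrite <- Hth0; replace (s / r) with (Rabs (0 - s) / r) by
        (rewrite Rabs_minus_sym, Rminus_0_r, Rabs_right; lra).
      apply Hlip; lra. }
  rewrite climb_0 in Hclimb by auto.
  assert (climb r A (sf q) < Gy - Py) by (apply Hbelow; lra).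
  lra.
Qed.

Lemma candidate_arc (s1 : R) : s1 <= r*A -> arc_on r m candidate 0 s1.
Proof.
  intros Hs1 s Hs; simpl.
  rewrite !turn_arc by (auto; nra); field; lra.
Qed.

Lemma candidate_arc_straight (Pth : R) : m_of Pth = m -> r * sin A <= Gy - Py ->
  form_arc_straight r Pth candidate /\ sf candidate = r*A + (Gy - Py) - r * sin A.
Proof.
  intros HmP Hreach.
  destruct (stop_length_straight r A Hr HA (Gy - Py)) as (Hlen & _ & _); [lra|lra|].
  split; [|exact Hlen].
  exists (r*A); simpl; rewrite Hlen; split; [nra|]; split.
  - rewrite HmP; apply candidate_arc; lra.
  - split.
    + intros s Hs; rewrite !turn_straight by (auto; lra); reflexivity.
    + exists (Z.of_nat k); rewrite turn_straight, <- INR_IZR_INZ by (auto; lra).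
      unfold vertical; ring.
Qed.

Lemma candidate_single_arc : Gy - Py < r * sin A ->
  form_single_arc r candidate /\
  sf candidate = r * (A - asin ((r * sin A - (Gy - Py)) / r)).
Proof.
  intro Hreach.
  destruct (stop_length_arc r A Hr HA (Gy - Py)) as (Hlen & Hle & _); [lra|lra|].
  split; [|exact Hlen].
  exists m; split; [exact Hm | apply candidate_arc; exact Hle].
Qed.

End Candidate.

(* Every start heading is a vertical heading rotated by -m_of*A, where A is
   the angular distance to the vertical; away from the ambiguous heading
   3*pi/2, n_of is the matching offset. *)
Lemma heading_normal_form (Pth : R) : 0 <= Pth < 2*PI ->
  exists (A : R) (k : nat),
    0 <= A <= PI /\ (m_of Pth = 1 \/ m_of Pth = -1) /\
    Pth = vertical k - m_of Pth * A /\
    Rmin (Rabs (Pth - PI/2)) (Rabs (Pth - 5*PI/2)) = A /\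
    (A < PI -> n_of Pth = vertical k - m_of Pth * (PI/2)).
Proof.
  intro Hth; pose proof PI_RGT_0.
  assert (Hdist : forall A, 0 <= A ->
    (A = Rabs (Pth - PI/2) /\ Rabs (Pth - PI/2) <= Rabs (Pth - 5*PI/2) \/
     A = Rabs (Pth - 5*PI/2) /\ Rabs (Pth - 5*PI/2) <= Rabs (Pth - PI/2)) ->
    Rmin (Rabs (Pth - PI/2)) (Rabs (Pth - 5*PI/2)) = A).
  { intros A _ [[-> ?] | [-> ?]]; [apply Rmin_left | apply Rmin_right]; lra. }
  unfold m_of, n_of, vertical; destruct (Rle_dec Pth (PI/2)).
  - exists (PI/2 - Pth), 0%nat; simpl.
    repeat split; try lra; apply Hdist; [lra|left].
    rewrite (Rabs_left1 (Pth - PI/2)), (Rabs_left1 (Pth - 5*PI/2)) by lra; lra.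
  - destruct (Rle_dec (3*PI/2) Pth).
    + exists (5*PI/2 - Pth), 1%nat; simpl.
      repeat split; try lra.
      * apply Hdist; [lra|right]; rewrite (Rabs_right (Pth - PI/2)), (Rabs_left1 (Pth - 5*PI/2)) by lra; lra.
      * intro HA; destruct (Rle_dec Pth (3*PI/2)); lra.
    + exists (Pth - PI/2), 0%nat; simpl.
      repeat split; try lra.
      * apply Hdist; [lra|left]; rewrite (Rabs_right (Pth - PI/2)), (Rabs_left1 (Pth - 5*PI/2)) by lra; lra.
      * intros _; destruct (Rle_dec Pth (3*PI/2)); lra.
Qed.

Section NormalForm.

Variables r Py Gy A m Pth : R.
Variable k : nat.
Hypothesis Hm : m = 1 \/ m = -1.
Hypothesis Hmo : m_of Pth = m.
Hypothesis HPth : Pth = vertical k - m * A.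

Lemma oy_of_normal : oy_of r Py Pth = Py + r * sin A.
Proof.
  unfold oy_of; rewrite Hmo, HPth, (proj1 (vertical_rotated k m A Hm)).
  destruct Hm as [-> | ->]; ring.
Qed.

Lemma h1_normal : Rmin (Rabs (Pth - PI/2)) (Rabs (Pth - 5*PI/2)) = A ->
  h1 r Py Pth Gy = r*A + (Gy - Py) - r * sin A.
Proof. intro Hmin; unfold h1; rewrite Hmin, oy_of_normal; ring. Qed.

Lemma h2_normal : 0 < r -> 0 <= A <= PI -> Py < Gy -> Gy - Py < r * sin A ->
  n_of Pth = vertical k - m * (PI/2) ->
  h2 r Py Pth Gy = r * (A - asin ((r * sin A - (Gy - Py)) / r)).
Proof.
  intros Hr HA HG Hreach Hn; unfold h2; rewrite oy_of_normal, Hmo, Hn.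
  replace ((Py + r * sin A - Gy) / r) with ((r * sin A - (Gy - Py)) / r) by (field; lra).
  set (c := (r * sin A - (Gy - Py)) / r).
  assert (Hc : r * c = r * sin A - (Gy - Py)) by (unfold c; field; lra).
  assert (0 < c < sin A) by (split; nra).
  destruct (asin_below c A HA ltac:(lra)) as [Hb _].
  rewrite acos_asin by (pose proof (SIN_bound A); lra).
  replace (Pth - m * (PI/2 - asin c) - (vertical k - m * (PI/2)))
    with (m * (asin c - A)) by (rewrite HPth; ring).
  rewrite Rabs_mult, (Rabs_left (asin c - A)) by lra.
  replace (Rabs m) with 1 by (destruct Hm as [-> | ->]; rewrite ?Rabs_R1, ?Rabs_m1; lra).
  ring.
Qed.

End NormalForm.

Theorem mainTheorem1 (rmin Px Py Pth Gy : R)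
  (Hr : 0 < rmin) (Hth : 0 <= Pth < 2 * PI) (HG : Py < Gy) :
  exists p : path,
    feasible_to_line rmin Px Py Pth Gy p /\
    (forall q : path, feasible_to_line rmin Px Py Pth Gy q -> sf p <= sf q) /\
    (oy_of rmin Py Pth <= Gy ->
       form_arc_straight rmin Pth p /\ sf p = h1 rmin Py Pth Gy) /\
    (Gy < oy_of rmin Py Pth ->
       form_single_arc rmin p /\ sf p = h2 rmin Py Pth Gy).
Proof.
  destruct (heading_normal_form Pth Hth) as (A & k & HA & Hm & HPth & Hmin & Hn).
  remember (m_of Pth) as m eqn:Hmo; symmetry in Hmo.
  pose proof (oy_of_normal rmin Py A m Pth k Hm Hmo HPth) as Hoy.
  exists (candidate rmin A m Px Py Gy k).
  split; [rewrite HPth; apply candidate_feasible; auto|split].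
  { intros q Hq; rewrite HPth in Hq; apply candidate_optimal; auto. }
  split; intro Hreach; rewrite Hoy in Hreach.
  - rewrite (h1_normal rmin Py Gy A m Pth k Hm Hmo HPth Hmin).
    apply candidate_arc_straight; auto; lra.
  - assert (HApi : A < PI).
    { destruct (Req_dec A PI) as [->|]; [rewrite sin_PI in Hreach|]; lra. }
    rewrite (h2_normal rmin Py Gy A m Pth k Hm Hmo HPth Hr HA HG ltac:(lra) (Hn HApi)).
    apply candidate_single_arc; auto; lra.
Qed.
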